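(* Suppose $A_\star\in\mathbb R^{n\times n}$ has a Jordan block with eigenvalue of modulus $|\lambda|=1$ and size $k$, and that $(A_\star,B_\star,C_\star,D_\star)$ is minimal. Then there exists a constant $\mathsf C>0$ depending on $A_\star,B_\star,C_\star$, $n$ and $k$ such that for all $N\ge\max\{20n^2,2k\}$, \[ \sqrt{\Big\|\sum_{t=0}^N\mathscr G_t\Big\|_{\mathrm{op}}}\ge\mathsf C N^k,\qquad\mathscr G_t:=\sum_{s=0}^tC_\star A_\star^{t-s}B_\star B_\star^\top(A_\star^{t-s})^\top C_\star^\top. \]
   Context: Minimality means $\mathrm{rank}[B_\star,A_\star B_\star,\dots,A_\star^{n-1}B_\star]=n$ and $\mathrm{rank}[C_\star^\top,(C_\star A_\star)^\top,\dots,(C_\star A_\star^{n-1})^\top]=n$. *)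

From HB Require Import structures.
From mathcomp Require Import all_boot all_order all_algebra.
From mathcomp Require Import classical_sets reals.
From mathcomp.real_closed Require Import complex.
Set Implicit Arguments. Unset Strict Implicit. Unset Printing Implicit Defensive.
Import Order.TTheory GRing.Theory Num.Theory.
Local Open Scope ring_scope.
Local Open Scope complex_scope.

Definition vnorm (R : realType) (d : nat) (x : 'cV[R]_d) : R :=
  Num.sqrt (\sum_(i < d) x i 0 ^+ 2).

Definition opnorm (R : realType) (q d : nat) (M : 'M[R]_(q, d)) : R :=
  reals.sup [set r : R | exists x : 'cV[R]_d, vnorm x <= 1 /\ r = vnorm (M *m x)]%classic.

Definition controllable (R : realType) (n m : nat) (A : 'M[R]_n) (B : 'M[R]_(n, m)) : Prop :=
  \rank (\mxrow_(j < n) (A ^+ j *m B)) = n.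

Definition observable (R : realType) (n p : nat) (A : 'M[R]_n) (C : 'M[R]_(p, n)) : Prop :=
  \rank (\mxrow_(j < n) (C *m A ^+ j)^T) = n.

Definition minimal (R : realType) (n m p : nat) (A : 'M[R]_n) (B : 'M[R]_(n, m))
  (C : 'M[R]_(p, n)) (D : 'M[R]_(p, m)) : Prop :=
  controllable A B /\ observable A C.

Definition jordan_block (F : ringType) (k : nat) (lam : F) : 'M[F]_k :=
  \matrix_(i < k, j < k) (if i == j then lam else if (j == i.+1 :> nat) then 1 else 0).

Definition has_jordan_block (F : fieldType) (n : nat) (A : 'M[F]_n) (k : nat) (lam : F) : Prop :=
  (0 < k)%N /\
  exists (r : nat) (M : 'M[F]_r) (P : 'M[F]_(k + r, n)) (Q : 'M[F]_(n, k + r)),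
    P *m Q = 1%:M /\ Q *m P = 1%:M /\
    P *m A *m Q = block_mx (jordan_block k lam) 0 0 M.

Definition cplx_mx (R : rcfType) (q d : nat) (M : 'M[R]_(q, d)) : 'M[R[i]]_(q, d) :=
  map_mx (fun x : R => x%:C) M.

Definition Gterm (R : realType) (n m p : nat) (A : 'M[R]_n) (B : 'M[R]_(n, m))
  (C : 'M[R]_(p, n)) (t : nat) : 'M[R]_p :=
  \sum_(s < t.+1) (C *m A ^+ (t - s) *m B *m B^T *m (A ^+ (t - s))^T *m C^T).

From HB Require Import structures.
From mathcomp Require Import all_boot all_order all_algebra.
From mathcomp Require Import classical_sets reals.
From mathcomp Require Import zify ring.
From mathcomp.real_closed Require Import complex.
Import Order.TTheory GRing.Theory Num.Theory.
Local Open Scope ring_scope.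
Local Open Scope complex_scope.
Set Implicit Arguments. Unset Strict Implicit. Unset Printing Implicit Defensive.

(* Write E_s = C A^s B for the Markov parameters. Inverting the full-rank
   controllability and observability matrices gives W_i, V_l with
   A^j = sum_(i,l<n) W_i E_(i+j+l) V_l. In Jordan coordinates the corner entry of
   the k x k block of A^j is binom(j, k-1) lam^(j-k+1), of modulus binom(j, k-1);
   hence binom(j, k-1)^2 is at most a constant times the Markov energy
   sum_(i,l<n) |E_(i+j+l)|_F^2. The trace of sum_(t<=N) G_t equals
   sum_(t<=N) sum_(s<=t) |E_s|_F^2 and is at most p times the operator norm. With
   h = N/16, summing the binomial bound over a window of 2h+k-1 indices j (h of
   which have binom(j, k-1) >= h^(k-1)/(k-1)!) and counting the at least h indices
   t whose prefix sums cover the whole window bounds the trace below by a constant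
   times h^(2k). *)

Section JordanBlockPowers.
Variables (F : comNzRingType) (k : nat) (lam : F).

Lemma jordan_blockE (l c : 'I_k) :
  jordan_block k lam l c = lam * (l == c)%:R + (c == l.+1 :> nat)%:R.
Proof.
rewrite mxE; case: eqP => [->|_]; last by rewrite mulr0 add0r; case: eqP.
by rewrite mulr1 eqn_leq ltnn andbF addr0.
Qed.

Lemma jordan_block_expE j (r c : 'I_k) :
  (jordan_block k lam ^+ j) r c =
  if (r <= c)%N then 'C(j, c - r)%:R * lam ^+ (j - (c - r)) else 0.
Proof.
elim: j r c => [|j IH] r c.
  rewrite expr0 mxE bin0n -val_eqE /=.
  by case: ltngtP => [lt_rc|//|->]; rewrite ?subnn ?mul1r // subn_eq0 leqNgt lt_rc mul0r.
rewrite exprSr -mulmxE mxE.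
under eq_bigr => l _ do rewrite jordan_blockE mulrDr.
rewrite big_split /= (bigD1 c) //= eqxx mulr1 big1 ?addr0; last first.
  by move=> l /negbTE ->; rewrite !mulr0.
have -> : \sum_(l < k) (jordan_block k lam ^+ j) r l * (c == l.+1 :> nat)%:R =
    if (0 < c)%N then (if (r <= c.-1)%N
      then 'C(j, c.-1 - r)%:R * lam ^+ (j - (c.-1 - r)) else 0) else 0.
  case: (posnP c) => [c0|c_gt0]; first by rewrite big1 // => l _; rewrite c0 mulr0.
  have lt_c'k : (c.-1 < k)%N by rewrite (leq_ltn_trans (leq_pred _)).
  rewrite (bigD1 (Ordinal lt_c'k)) //= prednK // eqxx mulr1 IH big1 ?addr0 // => l.
  move=> ne_l; case: eqP => [def_c|]; last by rewrite mulr0.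
  by move: ne_l; rewrite -val_eqE /= def_c eqxx.
rewrite IH mulrC.
case: (ltngtP r c) => [lt_rc|lt_cr|<-{c}].
- have c_gt0 : (0 < c)%N by apply: leq_ltn_trans lt_rc.
  rewrite c_gt0 -ltnS prednK // lt_rc.
  have [d def_d] : exists d, (c - r = d.+1)%N.
    by exists (c - r).-1; rewrite prednK ?subn_gt0.
  have -> : (c.-1 - r = d)%N by rewrite -subn1 subnAC subn1 def_d.
  rewrite def_d binS natrD mulrDl subSS; congr (_ + _).
  case: (leqP d.+1 j) => [le_dj|lt_jd]; first by rewrite mulrCA -exprS subnSK.
  by rewrite bin_small // !mul0r mulr0.
- rewrite mulr0 add0r; case: (posnP c) => //= c_gt0.
  by rewrite leqNgt (leq_trans _ lt_cr) // -ltnS prednK.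
- rewrite subnn !bin0 !subn0 !mul1r -exprS.
  case: (posnP r) => [_|r_gt0]; first by rewrite addr0.
  by rewrite leqNgt ltn_predL r_gt0 addr0.
Qed.

End JordanBlockPowers.

Lemma conj_mx_exp (R : pzRingType) n d (P : 'M[R]_(d, n)) (Q : 'M[R]_(n, d))
    (A : 'M[R]_n) j :
  P *m Q = 1%:M -> Q *m P = 1%:M -> P *m A ^+ j *m Q = (P *m A *m Q) ^+ j.
Proof.
move=> PQ QP; elim: j => [|j IH]; first by rewrite !expr0 mulmx1 PQ.
by rewrite !exprSr -!mulmxE -IH !mulmxA -[P *m _ *m Q *m P](mulmxA _ Q P) QP mulmx1.
Qed.

Lemma block_diag_mx_exp (R : pzSemiRingType) m n (A : 'M[R]_m) (B : 'M[R]_n) j :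
  block_mx A 0 0 B ^+ j = block_mx (A ^+ j) 0 0 (B ^+ j).
Proof.
elim: j => [|j IH]; first by rewrite !expr0 -scalar_mx_block.
rewrite !exprS IH -mulmxE mulmx_block.
by rewrite !mulmx0 !mul0mx !add0r !addr0.
Qed.

Section Complexification.
Variable R : rcfType.

Lemma cplx_mxM a b c (X : 'M[R]_(a, b)) (Y : 'M[R]_(b, c)) :
  cplx_mx (X *m Y) = cplx_mx X *m cplx_mx Y.
Proof. exact: map_mxM. Qed.

Lemma cplx_mxX n (X : 'M[R]_n) j : cplx_mx (X ^+ j) = cplx_mx X ^+ j.
Proof.
elim: j => [|j IH]; first exact: map_mx1.
by rewrite !exprSr -!mulmxE cplx_mxM IH.
Qed.

Lemma cplx_mx_sum a b (I : finType) (F : I -> 'M[R]_(a, b)) :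
  cplx_mx (\sum_i F i) = \sum_i cplx_mx (F i).
Proof. exact: map_mx_sum. Qed.

Lemma normc_real (x : R) : `|x%:C| = `|x|%:C.
Proof. by rewrite normc_def /= expr0n /= addr0 sqrtr_sqr. Qed.

End Complexification.

Definition markov (R : pzRingType) n m p (A : 'M[R]_n) (B : 'M[R]_(n, m))
  (C : 'M[R]_(p, n)) s : 'M[R]_(p, m) := C *m A ^+ s *m B.

Lemma exp_eq_sum_markov (R : realType) n m p (A : 'M[R]_n) (B : 'M[R]_(n, m))
    (C : 'M[R]_(p, n)) :
  controllable A B -> observable A C ->
  exists (W : 'I_n -> 'M[R]_(n, p)) (V : 'I_n -> 'M[R]_(m, n)),
  forall j, A ^+ j = \sum_(i < n) \sum_(l < n) W i *m markov A B C (i + j + l) *m V l.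
Proof.
rewrite /controllable /observable => ctrl obs.
have /row_freeP [X XK] : row_free (\mxrow_(j < n) (A ^+ j *m B)) by rewrite /row_free ctrl.
have /row_freeP [Y YK] : row_free (\mxrow_(j < n) (C *m A ^+ j)^T) by rewrite /row_free obs.
rewrite -(submxcolK X) mul_mxrow_mxcol in XK.
rewrite -(submxcolK Y) mul_mxrow_mxcol in YK.
have {}YK : \sum_(i < n) (submxcol Y i)^T *m (C *m A ^+ i) = 1%:M.
  by rewrite -trmx1 -YK linear_sum /=; apply: eq_bigr => i _; rewrite trmx_mul trmxK.
exists (fun i => (submxcol Y i)^T), (submxcol X) => j.
rewrite -[A ^+ j]mulmx1 -[A ^+ j]mul1mx -{1}YK -XK mulmx_suml.
rewrite mulmx_suml; apply: eq_bigr => i _; rewrite mulmx_sumr; apply: eq_bigr => l _.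
by rewrite /markov !exprD -!mulmxE !mulmxA.
Qed.

Lemma ler_sum_term (R : numDomainType) (I : finType) (F : I -> R) i0 :
  (forall i, 0 <= F i) -> F i0 <= \sum_i F i.
Proof. by move=> F_ge0; rewrite (bigD1 i0) //= lerDl sumr_ge0. Qed.

Section FrobeniusNorm.
Variables (R : rcfType) (q d : nat).
Implicit Types M : 'M[R]_(q, d).

Definition frob2 M : R := \sum_(a < q) \sum_(b < d) M a b ^+ 2.

Lemma frob2_ge0 M : 0 <= frob2 M.
Proof. by do 2!(apply: sumr_ge0 => ? _); exact: sqr_ge0. Qed.

Lemma normr_le_sqrt_frob2 M a b : `|M a b| <= Num.sqrt (frob2 M).
Proof.
rewrite -sqrtr_sqr ler_sqrt ?frob2_ge0 // /frob2.
have row_ge0 a' : 0 <= \sum_(b' < d) M a' b' ^+ 2 by apply: sumr_ge0 => ? _; exact: sqr_ge0.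
apply: le_trans _ (ler_sum_term a row_ge0).
by apply: ler_sum_term => ?; exact: sqr_ge0.
Qed.

Lemma mxtrace_mul_trmx M : \tr (M *m M^T) = frob2 M.
Proof.
by apply: eq_bigr => a _; rewrite mxE; apply: eq_bigr => b _; rewrite mxE expr2.
Qed.

Lemma norm_mulmx_cplx_le a b (X : 'M[R[i]]_(a, q)) (E : 'M[R]_(q, d))
    (Y : 'M[R[i]]_(d, b)) r c :
  `|(X *m cplx_mx E *m Y) r c|
    <= (\sum_u \sum_v `|X r u| * `|Y v c|) * (Num.sqrt (frob2 E))%:C.
Proof.
rewrite mxE; under eq_bigr do rewrite mxE mulr_suml.
rewrite exchange_big /= mulr_suml; apply: le_trans (ler_norm_sum _ _ _) _.
apply: ler_sum => u _; rewrite mulr_suml; apply: le_trans (ler_norm_sum _ _ _) _.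
apply: ler_sum => v _; rewrite mxE !normrM normc_real mulrAC ler_wpM2l ?mulr_ge0 //.
by rewrite lecR normr_le_sqrt_frob2.
Qed.

End FrobeniusNorm.

Definition markov_energy (R : rcfType) n m p (A : 'M[R]_n) (B : 'M[R]_(n, m))
  (C : 'M[R]_(p, n)) j : R :=
  \sum_(i < n) \sum_(l < n) frob2 (markov A B C (i + j + l)).

Lemma markov_energy_ge0 (R : rcfType) n m p (A : 'M[R]_n) (B : 'M[R]_(n, m))
    (C : 'M[R]_(p, n)) j :
  0 <= markov_energy A B C j.
Proof. by do 2!(apply: sumr_ge0 => ? _); exact: frob2_ge0. Qed.

Lemma entry_cplx_exp_le_markov_energy (R : realType) n m p (A : 'M[R]_n)
    (B : 'M[R]_(n, m)) (C : 'M[R]_(p, n)) a b (X : 'M[R[i]]_(a, n))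
    (Y : 'M[R[i]]_(n, b)) r c :
  controllable A B -> observable A C ->
  exists2 K : R, 0 <= K & forall j,
    `|(X *m cplx_mx (A ^+ j) *m Y) r c| <= (K * Num.sqrt (markov_energy A B C j))%:C.
Proof.
move=> ctrl obs; have [W [V AjE]] := exp_eq_sum_markov ctrl obs.
pose Kc := \sum_(i < n) \sum_(l < n) \sum_u \sum_v
  `|(X *m cplx_mx (W i)) r u| * `|(cplx_mx (V l) *m Y) v c|.
have Kc_ge0 : 0 <= Kc by do 4!(apply: sumr_ge0 => ? _); exact: mulr_ge0.
have /complex_realP [K def_Kc] : Kc \is Num.real by exact: ger0_real.
exists K => [|j]; first by rewrite -lecR -def_Kc.
rewrite rmorphM /= -def_Kc AjE cplx_mx_sum mulmx_sumr mulmx_suml summxE mulr_suml.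
apply: le_trans (ler_norm_sum _ _ _) _; apply: ler_sum => i _.
rewrite cplx_mx_sum mulmx_sumr mulmx_suml summxE mulr_suml.
apply: le_trans (ler_norm_sum _ _ _) _; apply: ler_sum => l _.
rewrite (cplx_mxM (W i *m _)) (cplx_mxM (W i)) !mulmxA -[_ *m cplx_mx (V l) *m Y]mulmxA.
apply: le_trans (norm_mulmx_cplx_le _ _ _ _ _) _.
apply: ler_wpM2l; first by do 2!(apply: sumr_ge0 => ? _); exact: mulr_ge0.
rewrite lecR ler_sqrt ?markov_energy_ge0 //.
have row_ge0 i' : 0 <= \sum_(l' < n) frob2 (markov A B C (i' + j + l')).
  by apply: sumr_ge0 => ? _; exact: frob2_ge0.
apply: le_trans _ (ler_sum_term i row_ge0).
by apply: ler_sum_term => ?; exact: frob2_ge0.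
Qed.

Lemma norm_jordan_corner_exp (F : numDomainType) n r k (lam : F) (A : 'M[F]_n)
    (M : 'M[F]_r) (P : 'M[F]_(k.+1 + r, n)) (Q : 'M[F]_(n, k.+1 + r)) j :
  `|lam| = 1 -> P *m Q = 1%:M -> Q *m P = 1%:M ->
  P *m A *m Q = block_mx (jordan_block k.+1 lam) 0 0 M ->
  `|(P *m A ^+ j *m Q) (lshift r ord0) (lshift r ord_max)| = 'C(j, k)%:R.
Proof.
move=> lam1 PQ QP PAQ; rewrite conj_mx_exp // PAQ block_diag_mx_exp block_mxEul.
by rewrite jordan_block_expE /= subn0 normrM normrX lam1 expr1n mulr1 normr_nat.
Qed.

Lemma binomial_sqr_le_markov_energy (R : realType) n m p k (A : 'M[R]_n)
    (B : 'M[R]_(n, m)) (C : 'M[R]_(p, n)) (lam : R[i]) :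
  `|lam| = 1 -> has_jordan_block (cplx_mx A) k lam ->
  controllable A B -> observable A C ->
  exists2 K : R, 0 < K & forall j, 'C(j, k.-1)%:R ^+ 2 <= K * markov_energy A B C j.
Proof.
move=> lam1 [k_gt0 [r [M [P [Q [PQ [QP PAQ]]]]]]] ctrl obs.
case: k k_gt0 P Q PQ QP PAQ => // k _ P Q PQ QP PAQ /=.
have [K K_ge0 entry_le] :=
  entry_cplx_exp_le_markov_energy P Q (lshift r ord0) (lshift r ord_max) ctrl obs.
exists (K ^+ 2 + 1) => [|j]; first by rewrite ltr_wpDl ?sqr_ge0.
have binom_le : 'C(j, k)%:R <= K * Num.sqrt (markov_energy A B C j).
  by rewrite -lecR rmorph_nat -(norm_jordan_corner_exp j lam1 PQ QP PAQ) -cplx_mxX.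
apply: le_trans (_ : _ <= (K * Num.sqrt (markov_energy A B C j)) ^+ 2) _.
  by rewrite lerXn2r ?nnegrE ?ler0n ?mulr_ge0 ?sqrtr_ge0.
by rewrite exprMn sqr_sqrtr ?markov_energy_ge0 // ler_wpM2r ?markov_energy_ge0 // lerDl.
Qed.

Section NonnegativeSums.
Variables (R : numDomainType) (f : nat -> R).
Hypothesis f_ge0 : forall j, 0 <= f j.

Lemma sum_nat_le_mono a b : (a <= b)%N ->
  \sum_(0 <= j < a) f j <= \sum_(0 <= j < b) f j.
Proof. by move=> le_ab; rewrite (big_cat_nat (leq0n a) le_ab) /= lerDl sumr_ge0. Qed.

Lemma sum_shift_le M s L : (s <= L)%N ->
  \sum_(0 <= j < M) f (j + s) <= \sum_(0 <= j < M + L) f j.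
Proof.
move=> le_sL; have -> : \sum_(0 <= j < M) f (j + s) = \sum_(s <= j < M + s) f j.
  by rewrite -[in RHS](add0n s) big_addn addnK.
apply: le_trans (sum_nat_le_mono (leq_add (leqnn M) le_sL)).
by rewrite (big_cat_nat (leq0n s) (leq_addl M s)) /= lerDr sumr_ge0.
Qed.

Lemma sum_window_le M a b :
  \sum_(0 <= j < M) \sum_(i < a) \sum_(l < b) f (i + j + l)%N
    <= (a * b)%:R * \sum_(0 <= j < M + (a + b)) f j.
Proof.
rewrite exchange_big /=.
apply: le_trans (_ : _ <= \sum_(i < a) \sum_(l < b) \sum_(0 <= j < M + (a + b)) f j) _.
  apply: ler_sum => i _; rewrite exchange_big /=; apply: ler_sum => l _.
  under eq_bigr => j _ do rewrite (addnC i) -addnA.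
  by apply: sum_shift_le; rewrite leq_add // ltnW.
by rewrite !sumr_const !card_ord -mulrnA mulr_natl mulnC.
Qed.

Lemma sum_prefix_sums_ge N T :
  (N.+1 - T)%:R * \sum_(0 <= j < T) f j
    <= \sum_(0 <= t < N.+1) \sum_(0 <= j < t.+1) f j.
Proof.
have prefix_ge0 t : 0 <= \sum_(0 <= j < t.+1) f j by exact: sumr_ge0.
case: (leqP T N.+1) => [le_TN|lt_NT]; last first.
  by rewrite (eqP (_ : N.+1 - T == 0)%N) ?mul0r ?sumr_ge0 // subn_eq0 ltnW.
rewrite (big_cat_nat (leq0n T) le_TN) /=.
apply: le_trans (_ : _ <= \sum_(T <= t < N.+1) \sum_(0 <= j < t.+1) f j) _; last first.
  by rewrite lerDr sumr_ge0.
rewrite mulr_natl -sumr_const_nat; apply: ler_sum_nat => t /andP [le_Tt _].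
exact: sum_nat_le_mono (leqW le_Tt).
Qed.

End NonnegativeSums.

Lemma expn_le_fact_bin h k : (h ^ k <= k`! * 'C(h + k, k))%N.
Proof.
rewrite mulnC bin_ffact; elim: k => [|k IH] //.
by rewrite expnS addnS ffactSS leq_mul // ltnW // ltnS leq_addr.
Qed.

Lemma sum_binomial_sqr_ge (R : numDomainType) h k :
  h%:R * (h%:R ^+ k) ^+ 2
    <= k`!%:R ^+ 2 * \sum_(0 <= j < h + k + h) 'C(j, k)%:R ^+ 2 :> R.
Proof.
rewrite (big_cat_nat (leq0n (h + k)) (leq_addr h (h + k))) /=.
apply: le_trans
  (_ : _ <= k`!%:R ^+ 2 * \sum_(h + k <= j < h + k + h) 'C(h + k, k)%:R ^+ 2) _.
  rewrite sumr_const_nat addKn mulrnAr mulr_natl -exprMn; apply: ler_wMn2r.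
  by rewrite -natrX -natrM lerXn2r ?nnegrE ?ler0n // ler_nat expn_le_fact_bin.
rewrite ler_wpM2l ?exprn_ge0 ?ler0n //.
apply: le_trans (_ : _ <= \sum_(h + k <= j < h + k + h) 'C(j, k)%:R ^+ 2) _.
  apply: ler_sum_nat => j /andP [le_j _].
  by rewrite lerXn2r ?nnegrE ?ler0n // ler_nat leq_bin2l.
by rewrite lerDr sumr_ge0 // => j _; rewrite exprn_ge0 ?ler0n.
Qed.

Lemma prefix_sums_ge_of_binomial_bound (R : numDomainType) (f : nat -> R) n k (K : R) N h :
  (forall j, 0 <= f j) -> 0 <= K ->
  (forall j, 'C(j, k)%:R ^+ 2 <= K * \sum_(i < n) \sum_(l < n) f (i + j + l)%N) ->
  (3 * h + k + 2 * n <= N.+1)%N ->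
  h%:R ^+ (2 * k.+1)
    <= (k`! ^ 2 * n ^ 2)%:R * K * \sum_(0 <= t < N.+1) \sum_(0 <= j < t.+1) f j.
Proof.
move=> f_ge0 K_ge0 binom_le le_window.
set M := (h + k + h)%N; set S := \sum_(0 <= j < M + (n + n)) f j.
have S_ge0 : 0 <= S by exact: sumr_ge0.
have binom_sum_le : \sum_(0 <= j < M) 'C(j, k)%:R ^+ 2 <= K * ((n * n)%:R * S).
  apply: le_trans (ler_wpM2l K_ge0 (sum_window_le f_ge0 M n n)); rewrite mulr_sumr.
  by apply: ler_sum_nat => j _; exact: binom_le.
have binom_h : h%:R * (h%:R ^+ k) ^+ 2 <= k`!%:R ^+ 2 * (K * ((n * n)%:R * S)).
  apply: le_trans (sum_binomial_sqr_ge R h k) _.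
  by rewrite ler_wpM2l ?exprn_ge0 ?ler0n.
have hS_le : h%:R * S <= \sum_(0 <= t < N.+1) \sum_(0 <= j < t.+1) f j.
  apply: le_trans (sum_prefix_sums_ge f_ge0 N (M + (n + n))).
  by rewrite ler_wpM2r // ler_nat /M; lia.
have -> : h%:R ^+ (2 * k.+1) = h%:R * (h%:R * (h%:R ^+ k) ^+ 2) :> R.
  by rewrite -exprM -!exprS; congr (_ ^+ _); lia.
apply: le_trans (_ : _ <= (k`! ^ 2 * n ^ 2)%:R * K * (h%:R * S)) _; last first.
  by rewrite ler_wpM2l ?mulr_ge0 ?ler0n.
have -> : (k`! ^ 2 * n ^ 2)%:R * K * (h%:R * S)
    = h%:R * (k`!%:R ^+ 2 * (K * ((n * n)%:R * S))) by rewrite !natrM; ring.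
by rewrite ler_wpM2l ?ler0n.
Qed.

Section OperatorNorm.
Variable R : realType.

Lemma vnorm_entry_le d (x : 'cV[R]_d) i : `|x i 0| <= vnorm x.
Proof.
rewrite /vnorm -sqrtr_sqr ler_sqrt; last by apply: sumr_ge0 => *; exact: sqr_ge0.
by apply: (ler_sum_term i (fun l => sqr_ge0 (x l 0))).
Qed.

Lemma vnorm_mulmx_le_opnorm q d (M : 'M[R]_(q, d)) x :
  vnorm x <= 1 -> vnorm (M *m x) <= opnorm M.
Proof.
move=> x_le1; apply: ub_le_sup; last by exists x.
exists (Num.sqrt (\sum_(l < q) (\sum_(j < d) `|M l j|) ^+ 2)) => _ [y [y_le1 ->]].
rewrite /vnorm ler_sqrt; last by apply: sumr_ge0 => *; exact: sqr_ge0.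
apply: ler_sum => l _; rewrite -real_normK ?num_real // ler_sqr ?nnegrE //;
  last by apply: sumr_ge0 => *; exact: normr_ge0.
rewrite mxE; apply: le_trans (ler_norm_sum _ _ _) _; apply: ler_sum => j _.
by rewrite normrM ler_piMr // (le_trans (vnorm_entry_le y j)).
Qed.

Lemma diag_le_opnorm p (S : 'M[R]_p) i : S i i <= opnorm S.
Proof.
have delta_le1 : vnorm (delta_mx i 0 : 'cV[R]_p) <= 1.
  rewrite /vnorm (bigD1 i) //= big1 ?addr0 => [|l /negbTE ne_li].
    by rewrite mxE !eqxx expr1n sqrtr1.
  by rewrite mxE ne_li expr0n.
apply: le_trans (vnorm_mulmx_le_opnorm S delta_le1).
rewrite -colE; apply: le_trans _ (vnorm_entry_le _ i).
by rewrite mxE ler_norm.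
Qed.

Lemma mxtrace_le_opnorm p (S : 'M[R]_p) : \tr S <= p%:R * opnorm S.
Proof.
apply: le_trans (_ : _ <= \sum_(i < p) opnorm S) _.
  exact: ler_sum (fun i _ => diag_le_opnorm S i).
by rewrite sumr_const card_ord mulr_natl.
Qed.

End OperatorNorm.

Lemma mxtrace_sum_Gterm (R : realType) n m p (A : 'M[R]_n) (B : 'M[R]_(n, m))
    (C : 'M[R]_(p, n)) N :
  \tr (\sum_(t < N.+1) Gterm A B C t)
    = \sum_(0 <= t < N.+1) \sum_(0 <= s < t.+1) frob2 (markov A B C s).
Proof.
rewrite raddf_sum big_mkord; apply: eq_bigr => t _.
rewrite /Gterm raddf_sum big_mkord [LHS](reindex_inj rev_ord_inj) /=; apply: eq_bigr => s _.
have le_st : (s <= t)%N by rewrite -ltnS.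
by rewrite subSS subKn // -mxtrace_mul_trmx /markov !trmx_mul !mulmxA.
Qed.

Lemma sqrt_inv_mul_le (R : rcfType) (D x y : R) :
  0 < D -> 0 <= x -> x ^+ 2 <= D * y -> Num.sqrt D^-1 * x <= Num.sqrt y.
Proof.
move=> D_gt0 x_ge0 le_x2_Dy.
have y_ge0 : 0 <= y by rewrite -(pmulr_rge0 _ D_gt0) (le_trans (sqr_ge0 x)).
rewrite -(ger0_norm x_ge0) -sqrtr_sqr -sqrtrM ?invr_ge0 ?(ltW D_gt0) //.
by rewrite ler_sqrt // ler_pdivrMl.
Qed.

Lemma has_jordan_block_size (F : fieldType) n (A : 'M[F]_n) k lam :
  has_jordan_block A k lam -> (0 < k <= n)%N.
Proof.
case=> k_gt0 [r [_ [P [Q [PQ _]]]]]; rewrite k_gt0 /=.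
have := mxrankM_maxl P Q; rewrite PQ mxrank1 => le_kr_rkP.
exact: leq_trans (leq_addr r k) (leq_trans le_kr_rkP (rank_leq_col P)).
Qed.

Lemma observable_out_gt0 (R : realType) n p (A : 'M[R]_n) (C : 'M[R]_(p, n)) :
  (0 < n)%N -> observable A C -> (0 < p)%N.
Proof.
move=> n_gt0 obs; have := rank_leq_col (\mxrow_(j < n) (C *m A ^+ j)^T).
by rewrite obs sum_nat_const card_ord; case: (posnP p) => // ->; rewrite muln0 leqNgt n_gt0.
Qed.

Lemma div16_bounds n k N : (0 < n)%N -> (maxn (20 * n ^ 2) (2 * k.+1) <= N)%N ->
  (N <= 32 * (N %/ 16))%N /\ (3 * (N %/ 16) + k + 2 * n <= N.+1)%N.
Proof.
rewrite geq_max => n_gt0 /andP [le_nN le_kN].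
have le_n_sq : (n <= n ^ 2)%N by rewrite leq_pmulr.
by split; lia.
Qed.

Theorem lemma2 (R : realType) (n m p k : nat)
  (A : 'M[R]_n) (B : 'M[R]_(n, m)) (C : 'M[R]_(p, n)) (D : 'M[R]_(p, m))
  (lam : R[i]) :
  `|lam| = 1 ->
  has_jordan_block (cplx_mx A) k lam ->
  minimal A B C D ->
  exists Cst : R, 0 < Cst /\
    forall N : nat, (maxn (20 * n ^ 2) (2 * k) <= N)%N ->
      Num.sqrt (opnorm (\sum_(t < N.+1) Gterm A B C t)) >= Cst * (N%:R) ^+ k.
Proof.
move=> lam1 jordan [ctrl obs].
have [K K_gt0 binom_le] := binomial_sqr_le_markov_energy lam1 jordan ctrl obs.
have /andP [k_gt0 le_kn] := has_jordan_block_size jordan.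
have n_gt0 := leq_trans k_gt0 le_kn.
have p_gt0 := observable_out_gt0 n_gt0 obs.
case: k k_gt0 {le_kn lam1 jordan} binom_le => // k _ /= binom_le.
pose c := 32%:R ^+ (2 * k.+1) * ((k`! ^ 2 * n ^ 2)%:R * K * p%:R) : R.
have c_gt0 : 0 < c.
  by rewrite !mulr_gt0 ?exprn_gt0 ?ltr0n ?muln_gt0 ?expn_gt0 ?fact_gt0 ?n_gt0.
exists (Num.sqrt c^-1); split => [|N le_N]; first by rewrite sqrtr_gt0 invr_gt0.
have [le_Nh window_le_N] := div16_bounds n_gt0 le_N.
set S := \sum_(t < N.+1) Gterm A B C t.
have := prefix_sums_ge_of_binomial_bound (fun s => frob2_ge0 (markov A B C s))
  (ltW K_gt0) binom_le window_le_N.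
rewrite -mxtrace_sum_Gterm -/S => trS_ge.
apply: sqrt_inv_mul_le => //; first by rewrite exprn_ge0 ?ler0n.
rewrite -exprM mulnC (le_trans (_ : _ <= (32 * (N %/ 16))%:R ^+ (2 * k.+1))) //.
  by rewrite lerXn2r ?nnegrE ?ler0n // ler_nat.
rewrite natrM exprMn /c -[_ * _ * opnorm S]mulrA ler_wpM2l ?exprn_ge0 ?ler0n //.
apply: le_trans trS_ge _.
by rewrite -!mulrA !ler_wpM2l ?ler0n ?(ltW K_gt0) // mxtrace_le_opnorm.
Qed.
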